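(* For $n\ge3$ let $\xi_1,\dots,\xi_n$ be i.i.d. random variables with a continuous distribution, arranged in a circle, and let $Z_n$ be the number of peaks, i.e. the number of $i$ with $\xi_i>\xi_{i-1}$ and $\xi_i>\xi_{i+1}$ (indices modulo $n$); set $Z_1=Z_2=1$. Then $Z_n\ge1$, $(Z_n)$ is stochastically increasing in $n$, $\mathbb E Z_n=n/3$ for $n\ge3$, $\mathrm{Var}\,Z_n=2n/45$ for $n\ge5$, $\mathbb E(Z_n-\mathbb E Z_n)^6=O(n^3)$, and $(Z_n)$ satisfies Condition 1 with $\alpha=1/3$.
   Context: Condition 1: $(Y_n)_{n\ge1}$ with $1\le Y_n\le n$, $\Pr(Y_n=n)<1$ for $n\ge2$, such that (i) $\Pr(Y_n\le k)\ge\Pr(Y_{n+1}\le k)$ for all $n,k\ge1$; (ii) for some $\alpha\in(0,1)$, $\varepsilon>0$ and $\delta_n=O((\log n)^{-1-\varepsilon})$, $\mathbb E Y_{n+1}-\mathbb E Y_n=\alpha+O(\delta_n)$; (iii) $\Pr(|Y_n-\alpha n|>\delta_n n)=O(n^{-2-\varepsilon})$. *)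

From Stdlib Require Import Reals.
From mathcomp Require Import all_boot all_fingroup.
Set Implicit Arguments. Unset Strict Implicit. Unset Printing Implicit Defensive.

Definition peaks (n : nat) (s : 'S_n) : nat :=
  #|[set i : 'I_n | (s (ord_pred i) < s i)%N && (s (ordS i) < s i)%N]|.

Definition peak_count (n k : nat) : nat := #|[set s : 'S_n | peaks s == k]|.

Local Open Scope R_scope.

(* For n >= 3 the relative order of n i.i.d.
   continuous random variables is a.s. a uniformly random permutation, so
   Pr(Z_n = k) = #{s in S_n : peaks s = k} / n!. *)
Definition PZ (n k : nat) : R :=
  if (n <= 2)%N then (if k == 1%N then 1 else 0)
  else INR (peak_count n k) / INR (factorial n).

(* Generic notions for a sequence of N-valued laws p n k = Pr(Y_n = k)
   supported in {0..n}. *)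
Definition cdf (p : nat -> nat -> R) (n k : nat) : R :=
  sum_f_R0 (fun j => p n j) k.

Definition mean (p : nat -> nat -> R) (n : nat) : R :=
  sum_f_R0 (fun k => INR k * p n k) n.

Definition central_moment (p : nat -> nat -> R) (m n : nat) : R :=
  sum_f_R0 (fun k => (INR k - mean p n) ^ m * p n k) n.

Definition bigO (x g : nat -> R) : Prop :=
  exists C N, forall n : nat, (N <= n)%nat -> Rabs (x n) <= C * g n.

Definition Condition1 (p : nat -> nat -> R) (alpha : R) : Prop :=
  (forall n k, (1 <= n)%nat -> 0 <= p n k) /\
  (forall n, (1 <= n)%nat -> sum_f_R0 (fun k => p n k) n = 1) /\
  (forall n k, (1 <= n)%nat -> p n k <> 0 -> (1 <= k <= n)%nat) /\
  (forall n, (2 <= n)%nat -> p n n < 1) /\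
  (forall n k, (1 <= n)%nat -> (1 <= k)%nat -> cdf p n k >= cdf p (S n) k) /\
  0 < alpha < 1 /\
  exists (eps : R) (delta : nat -> R), 0 < eps /\
    bigO delta (fun n => Rpower (ln (INR n)) (-1 - eps)) /\
    bigO (fun n => mean p (S n) - mean p n - alpha) delta /\
    bigO (fun n => sum_f_R0 (fun k =>
            if Rlt_dec (delta n * INR n) (Rabs (INR k - alpha * INR n))
            then p n k else 0) n)
         (fun n => Rpower (INR n) (-2 - eps)).

From Stdlib Require Import Reals Lra Lia Arith.
From mathcomp Require all_boot all_fingroup zify.

(* Rotate a uniform arrangement of n+1 values so that the maximum sits in the
   last position: removing it leaves a uniform arrangement of n values, and
   reinserting it between the last and the first position creates a new peak
   unless one of these two positions was a peak, which by rotation invariance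
   happens with probability 2k/n given k peaks.  Hence
     Pr(Z_{n+1} = k+1) = 2(k+1)/n Pr(Z_n = k+1) + (n-2k)/n Pr(Z_n = k).
   Since Z_n <= n/2, the cdf drops by (1 - 2k/n) Pr(Z_n = k) >= 0 from n to
   n+1.  The recursion also gives M_r(n+1) = (1 - 2r/n) M_r(n) + (lower
   moments) for M_r(n) = E (Z_n - n/3)^r; as the factor vanishes at n = 2r, M_r
   agrees for n > 2r with the polynomial solving the same recursion.  This
   yields E Z_n = n/3, Var Z_n = 2n/45 and M_6(n) = O(n^3), and Markov's
   inequality for the sixth moment gives the tail bound of Condition 1. *)

Module PeakCount.
Import all_boot all_fingroup zify.
Set Implicit Arguments. Unset Strict Implicit. Unset Printing Implicit Defensive.

Definition is_peak n (s : 'S_n) (i : 'I_n) : bool :=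
  (s (ord_pred i) < s i) && (s (ordS i) < s i).

Lemma peaks_sum n (s : 'S_n) : peaks s = \sum_(i < n) is_peak s i.
Proof.
rewrite /peaks cardsE -sum1_card big_mkcond /=.
by apply: eq_bigr => i _; rewrite /is_peak -topredE /=; case: ifP.
Qed.

Lemma peak_count_sum n k : peak_count n k = \sum_(s : 'S_n) (peaks s == k).
Proof.
rewrite /peak_count cardsE -sum1_card big_mkcond /=.
by apply: eq_bigr => s _; rewrite -topredE /= -[eqn _ _]/(_ == _); case: eqP.
Qed.

Lemma ord_predE n (i : 'I_n) : (ord_pred i : nat) = if (i : nat) == 0 then n.-1 else i.-1.
Proof.
case: i => [[|i] lt_i_n] /=; first by rewrite add0n modn_small //; lia.
by rewrite modnDr modn_small //; lia.
Qed.

Lemma ordSE n (i : 'I_n) : (ordS i : nat) = if (i : nat) == n.-1 then 0 else i.+1.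
Proof.
case: i => [i lt_i_n] /=; case: eqP => [->|ne_i].
  by rewrite prednK ?modnn //; lia.
by rewrite modn_small //; lia.
Qed.

Definition rot n : 'S_n := perm (@ordS_inj n).

Lemma is_peak_rot n (s : 'S_n) i : is_peak (rot n * s)%g i = is_peak s (ordS i).
Proof. by rewrite /is_peak !permM !permE ord_predK ordSK. Qed.

Lemma peaks_rot n (s : 'S_n) : peaks (rot n * s)%g = peaks s.
Proof.
rewrite !peaks_sum [RHS](reindex_inj (@ordS_inj n)).
by apply: eq_bigr => i _; rewrite is_peak_rot.
Qed.

Lemma sum_perm_rot n (F : 'S_n -> nat) : \sum_(s : 'S_n) F (rot n * s)%g = \sum_s F s.
Proof. by rewrite [RHS](reindex_inj (mulgI (rot n))). Qed.

Lemma ordS_invariant_const n (G : 'I_n.+1 -> nat) :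
  (forall i, G (ordS i) = G i) -> forall i, G i = G ord0.
Proof.
move=> G_rot i; rewrite -(inord_val i); elim: (nat_of_ord i) (ltn_ord i) => [|k IHk] lt_k.
  by congr G; apply: val_inj; rewrite /= inordK.
have -> : inord k.+1 = ordS (inord k) :> 'I_n.+1.
  by apply: val_inj; rewrite /= !inordK ?modn_small //; lia.
by rewrite G_rot IHk // ltnW.
Qed.

Lemma sum_ordS_invariant n (G : 'I_n.+1 -> nat) :
  (forall i, G (ordS i) = G i) -> \sum_(i < n.+1) G i = n.+1 * G ord0.
Proof.
move=> G_rot; rewrite (eq_bigr (fun _ => G ord0)) => [|i _]; last exact: ordS_invariant_const.
by rewrite sum_nat_const card_ord.
Qed.

Lemma sum_perm_fix_max n (F : 'S_n.+1 -> nat) :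
  \sum_(s : 'S_n.+1 | s ord_max == ord_max) F s =
  \sum_(t : 'S_n) F (lift_perm ord_max ord_max t).
Proof.
rewrite (reindex (lift_perm ord_max ord_max)); last first.
  pose unlift_fun i (s : 'S_n.+1) k := odflt k (unlift (s i) (s (lift i k))).
  have unlift_funK i (s : 'S_n.+1) k : lift (s i) (unlift_fun i s k) = s (lift i k).
    rewrite /unlift_fun; have:= neq_lift i k.
    by rewrite -(can_eq (permK s)) => /unlift_some[] ? ? ->.
  have unlift_fun_inj : injective (unlift_fun ord_max _).
    move=> s; apply: can_inj (unlift_fun (s ord_max) s^-1%g) _ => k'.
    by rewrite {1}/unlift_fun unlift_funK !permK liftK.
  exists (fun s => perm (unlift_fun_inj s)) => [s _ | s].
    by apply/permP=> k'; rewrite permE /unlift_fun lift_perm_lift lift_perm_id liftK.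
  move/(s _ =P _) => s_max; apply/permP=> k.
  case: (unliftP ord_max k) => [k'|] ->; rewrite ?lift_perm_id //.
  by rewrite lift_perm_lift permE; have := unlift_funK ord_max s k'; rewrite s_max.
by apply: eq_big => [s | s _] //; rewrite lift_perm_id eqxx.
Qed.

Definition insert_max n (t : 'S_n) : 'S_n.+1 := lift_perm ord_max ord_max t.

Lemma sum_preim_perm n (s : 'S_n) j : \sum_(i < n) (s i == j) = 1.
Proof.
rewrite (bigD1 (s^-1 j)%g) //= permKV eqxx big1 // => i ne_i.
by case: eqP => // s_i; move: ne_i; rewrite -s_i permK eqxx.
Qed.

Lemma peak_count_insert_max n k :
  peak_count n.+1 k = n.+1 * \sum_(t : 'S_n) (peaks (insert_max t) == k).
Proof.
rewrite /insert_max -(sum_perm_fix_max (fun s => (peaks s == k) : nat)) peak_count_sum.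
under eq_bigr => s _ do rewrite -[(peaks s == k) : nat]mul1n -(sum_preim_perm s ord_max) big_distrl.
rewrite exchange_big /=.
pose G i := \sum_(s : 'S_n.+1) (s i == ord_max) * (peaks s == k).
have G_rot i : G (ordS i) = G i.
  rewrite /G -[RHS](sum_perm_rot (fun s => (s i == ord_max) * (peaks s == k))).
  by apply: eq_bigr => s _; rewrite peaks_rot permM permE.
rewrite (sum_ordS_invariant G_rot) -(ordS_invariant_const G_rot ord_max) /G [in RHS]big_mkcond.
by congr (_ * _); apply: eq_bigr => s _; case: eqP; rewrite ?mul1n.
Qed.

Lemma is_peak_insert_max m (t : 'S_m.+1) : is_peak (insert_max t) ord_max.
Proof.
have lt_m : forall x : 'I_m.+2, x != ord_max -> insert_max t x < m.+1.
  move=> x; case: (unliftP ord_max x) => [x'|] -> //; last by rewrite eqxx.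
  by rewrite /insert_max lift_perm_lift lift_max.
rewrite /is_peak /insert_max lift_perm_id /= !lt_m //; apply/eqP => /(congr1 val) /=.
  by rewrite modnn.
by rewrite modnDr modn_small //; lia.
Qed.

Lemma not_peak_first_last m (t : 'S_m.+2) : ~~ (is_peak t ord0 && is_peak t ord_max).
Proof.
have pred0 : ord_pred (ord0 : 'I_m.+2) = ord_max by apply: val_inj; rewrite /= modn_small.
have S_max : ordS (ord_max : 'I_m.+2) = ord0 by apply: val_inj; rewrite /= modnn.
by rewrite /is_peak pred0 S_max; apply/negP => /andP[/andP[? _] /andP[_ ?]]; lia.
Qed.

Lemma is_peak_insert m (t : 'S_m.+2) (j : 'I_m.+2) :
  is_peak (insert_max t) (lift ord_max j) = [&& j != ord0, j != ord_max & is_peak t j].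
Proof.
have insE x : insert_max t (lift ord_max x) = t x :> nat.
  by rewrite /insert_max lift_perm_lift lift_max.
have ins_max : insert_max t ord_max = m.+2 :> nat by rewrite /insert_max lift_perm_id.
have not_gt_max x : (m.+2 < t x) = false by apply/negbTE; rewrite -leqNgt ltnW.
rewrite /is_peak; case: (eqVneq j ord0) => [->|nz_j] /=.
  have -> : ord_pred (lift ord_max (ord0 : 'I_m.+2)) = ord_max.
    by apply: ord_inj; rewrite ord_predE lift_max.
  by rewrite ins_max insE not_gt_max.
case: (eqVneq j ord_max) => [->|ne_j_max] /=.
  have -> : ordS (lift ord_max (ord_max : 'I_m.+2)) = ord_max.
    by apply: ord_inj; rewrite ordSE lift_max /= ltn_eqF.
  by rewrite ins_max insE not_gt_max andbF.
have nz_j' : (j : nat) != 0 := nz_j.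
have ne_j_max' : (j : nat) != m.+1 := ne_j_max.
have -> : ord_pred (lift ord_max j) = lift ord_max (ord_pred j).
  by apply: ord_inj; rewrite ord_predE !lift_max ord_predE (negbTE nz_j').
have -> : ordS (lift ord_max j) = lift ord_max (ordS j).
  by apply: ord_inj; rewrite ordSE !lift_max ordSE (negbTE ne_j_max') ltn_eqF.
by rewrite !insE.
Qed.

Lemma peaks_insert_max m (t : 'S_m.+2) :
  peaks (insert_max t) + (is_peak t ord0 || is_peak t ord_max) = (peaks t).+1.
Proof.
have ne_0_max : (ord0 : 'I_m.+2) != ord_max by rewrite -val_eqE.
rewrite !peaks_sum big_ord_recr is_peak_insert_max [in RHS](bigD1 ord0) //.
rewrite [in RHS](bigD1 ord_max) //=.
set S := \sum_(j < m.+2 | (j != ord0) && (j != ord_max)) (is_peak t j : nat).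
have -> : \sum_(j < m.+2) is_peak (insert_max t) (widen_ord (leqnSn _) j) = S.
  rewrite /S [RHS]big_mkcond; apply: eq_bigr => j _.
  have -> : widen_ord (leqnSn _) j = lift ord_max j by apply: ord_inj; rewrite lift_max.
  by rewrite is_peak_insert; case: (j != ord0); case: (j != ord_max).
have := not_peak_first_last t.
by case: (is_peak t ord0); case: (is_peak t ord_max) => //= _; lia.
Qed.

Definition peak_at_count n k (r : 'I_n) := \sum_(t : 'S_n) is_peak t r * (peaks t == k).

Lemma peak_at_count_rot n k (r : 'I_n) : peak_at_count k (ordS r) = peak_at_count k r.
Proof.
rewrite /peak_at_count -[RHS](sum_perm_rot (fun t => is_peak t r * (peaks t == k))).
by apply: eq_bigr => t _; rewrite is_peak_rot peaks_rot.
Qed.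

Lemma sum_peak_at_count n k : \sum_(r < n) peak_at_count k r = k * peak_count n k.
Proof.
rewrite /peak_at_count exchange_big peak_count_sum big_distrr /=; apply: eq_bigr => t _.
by rewrite -big_distrl /= -peaks_sum; case: eqP => [->|]; rewrite ?muln1 ?muln0.
Qed.

Lemma sum_peak_first_last m k :
  m.+2 * \sum_(t : 'S_m.+2) (is_peak t ord0 || is_peak t ord_max) * (peaks t == k)
  = 2 * (k * peak_count m.+2 k).
Proof.
have -> : \sum_(t : 'S_m.+2) (is_peak t ord0 || is_peak t ord_max) * (peaks t == k)
          = peak_at_count k (ord0 : 'I_m.+2) + peak_at_count k (ord_max : 'I_m.+2).
  rewrite -big_split /=; apply: eq_bigr => t _; have := not_peak_first_last t.
  by case: (is_peak t ord0); case: (is_peak t ord_max) => //= _; lia.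
have rot := @peak_at_count_rot m.+2 k.
rewrite -sum_peak_at_count (sum_ordS_invariant rot) (ordS_invariant_const rot ord_max); lia.
Qed.

(* n c(n+1, j+1) = (n+1) (2 (j+1) c(n, j+1) + (n - 2j) c(n, j)) for n = m+2,
   rearranged so that no truncated subtraction occurs. *)
Lemma peak_count_rec m j :
  m.+2 * peak_count m.+3 j.+1 + m.+3 * (2 * (j * peak_count m.+2 j))
  = m.+3 * (2 * (j.+1 * peak_count m.+2 j.+1) + m.+2 * peak_count m.+2 j).
Proof.
rewrite peak_count_insert_max.
set X := \sum_(t : 'S_m.+2) _.
have ends i := sum_peak_first_last m i.
have X_split : X + \sum_(t : 'S_m.+2) (is_peak t ord0 || is_peak t ord_max) * (peaks t == j)
    = \sum_(t : 'S_m.+2) (is_peak t ord0 || is_peak t ord_max) * (peaks t == j.+1)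
      + peak_count m.+2 j.
  rewrite /X peak_count_sum -!big_split /=; apply: eq_bigr => t _.
  have := peaks_insert_max t; case: (_ || _) => /= ins_t.
    have -> : peaks (insert_max t) = peaks t by lia.
    by rewrite mul1n; case: eqP; case: eqP => //; lia.
  have -> : peaks (insert_max t) = (peaks t).+1 by lia.
  by rewrite !mul0n eqSS addn0.
have := ends j; have := ends j.+1; nia.
Qed.

Lemma peak_count0 m : peak_count m.+2 0 = 0.
Proof.
rewrite peak_count_insert_max big1 ?muln0 // => t _.
by have := is_peak_insert_max t; rewrite peaks_sum (bigD1 ord_max) //= => ->.
Qed.

Lemma peak_count3 k : peak_count 3 k = 6 * (k == 1).
Proof.
rewrite peak_count_insert_max (eq_bigr (fun _ => (k == 1) : nat)) => [|t _].
  by rewrite sum_nat_const card_Sn; case: (k == 1).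
have peaks_t : peaks t = is_peak t ord0 + is_peak t ord_max.
  rewrite peaks_sum big_ord_recr big_ord1; congr (is_peak t _ + _); exact: ord_inj.
have := peaks_insert_max t; have := not_peak_first_last t; rewrite peaks_t.
by case: (is_peak t ord0); case: (is_peak t ord_max) => //= _ ins_t;
  rewrite (_ : peaks (insert_max t) = 1) 1?eq_sym //; lia.
Qed.

Lemma leq_le m n : m <= n <-> (m <= n)%coq_nat.
Proof. by split => /leP. Qed.

Local Open Scope R_scope.

Lemma PZ_le2_1 n : (n <= 2)%coq_nat -> PZ n 1 = 1.
Proof. by move=> /leP le_n2; rewrite /PZ le_n2. Qed.

Lemma PZ_le2_ne1 n k : (n <= 2)%coq_nat -> k <> 1%N -> PZ n k = 0.
Proof. by move=> /leP le_n2 /eqP/negbTE ne_k1; rewrite /PZ le_n2 ne_k1. Qed.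

Lemma PZ_ge3 m k : PZ m.+3 k = INR (peak_count m.+3 k) / INR m.+3`!.
Proof. by []. Qed.

Lemma PZ3_1 : PZ 3 1 = 1.
Proof. by rewrite PZ_ge3 peak_count3 /=; field. Qed.

Lemma PZ3_ne1 k : k <> 1%N -> PZ 3 k = 0.
Proof. by move=> /eqP/negbTE ne_k1; rewrite PZ_ge3 peak_count3 ne_k1 /=; field. Qed.

Lemma INR_factS n : INR n.+1`! = INR n.+1 * INR n`!.
Proof. by rewrite factS -multE mult_INR. Qed.

Lemma INR_fact_gt0 n : 0 < INR n`!.
Proof. by apply: lt_0_INR; apply/ltP; exact: fact_gt0. Qed.

Lemma peak_count_recR m j :
  INR m.+2 * INR (peak_count m.+3 j.+1)
  = INR m.+3 * (2 * INR j.+1 * INR (peak_count m.+2 j.+1)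
                + (INR m.+2 - 2 * INR j) * INR (peak_count m.+2 j)).
Proof.
have := f_equal INR (peak_count_rec m j).
rewrite -!multE -!plusE; repeat rewrite (plus_INR, mult_INR, S_INR); rewrite INR_0; lra.
Qed.

End PeakCount.

Import PeakCount.
Open Scope R_scope.

Lemma INR_gt0 n : (1 <= n)%nat -> 0 < INR n.
Proof. intros h; apply lt_0_INR; lia. Qed.

Lemma PZ_ge0 n k : 0 <= PZ n k.
Proof.
  destruct n as [|[|[|m]]];
    try (destruct (Nat.eq_dec k 1) as [->|ne_k];
         [rewrite PZ_le2_1 by lia | rewrite PZ_le2_ne1 by lia]; lra).
  rewrite PZ_ge3. apply Rle_mult_inv_pos; [apply pos_INR | apply INR_fact_gt0].
Qed.

Lemma PZ_0 n : PZ n 0 = 0.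
Proof.
  destruct n as [|[|[|m]]]; try (apply PZ_le2_ne1; lia).
  rewrite PZ_ge3, (peak_count0 (S m)), INR_0. unfold Rdiv; ring.
Qed.

Lemma PZ_succ n k : (3 <= n)%nat ->
  PZ (S n) (S k) = 2 * INR (S k) / INR n * PZ n (S k) + (INR n - 2 * INR k) / INR n * PZ n k.
Proof.
  intros h. destruct n as [|[|[|m]]]; try lia.
  rewrite !PZ_ge3, INR_factS.
  pose proof (peak_count_recR (S m) k) as rec.
  pose proof (INR_fact_gt0 (S (S (S m)))).
  pose proof (INR_gt0 (S (S (S m))) ltac:(lia)).
  pose proof (INR_gt0 (S (S (S (S m)))) ltac:(lia)).
  apply (Rmult_eq_reg_l (INR (S (S (S m))))); [|lra].
  unfold Rdiv at 1. rewrite <- Rmult_assoc, rec. field. lra.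
Qed.

Lemma PZ_half n k : (3 <= n)%nat -> (n < 2 * k)%nat -> PZ n k = 0.
Proof.
  intros h. revert k. induction n as [|n IH]; intros k hk; [lia|].
  destruct (Nat.eq_dec n 2) as [->|ne_n]; [apply PZ3_ne1; lia|].
  destruct k as [|k]; [lia|].
  rewrite PZ_succ, (IH ltac:(lia) (S k)) by lia.
  destruct (Nat.eq_dec n (2 * k)) as [->|ne_nk].
  - rewrite mult_INR. simpl INR. unfold Rdiv; ring.
  - rewrite (IH ltac:(lia) k) by lia. ring.
Qed.

Definition expect n (f : nat -> R) : R := sum_f_R0 (fun k => f k * PZ n k) n.

Lemma expect_ext n f g : (forall k, f k = g k) -> expect n f = expect n g.
Proof. intros fg; unfold expect; apply sum_eq; intros; rewrite fg; ring. Qed.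

Lemma expect_plus n f g : expect n (fun k => f k + g k) = expect n f + expect n g.
Proof. unfold expect; rewrite <- plus_sum; apply sum_eq; intros; ring. Qed.

Lemma expect_scal n c f : expect n (fun k => c * f k) = c * expect n f.
Proof. unfold expect; rewrite scal_sum; apply sum_eq; intros; ring. Qed.

Lemma sum_PZ_succ n f N : (3 <= n)%nat ->
  sum_f_R0 (fun k => f k * PZ (S n) k) (S N) =
  sum_f_R0 (fun k => 2 * INR k / INR n * f k * PZ n k) (S N) +
  sum_f_R0 (fun k => (INR n - 2 * INR k) / INR n * f (S k) * PZ n k) N.
Proof.
  intros h. pose proof (INR_gt0 n ltac:(lia)).
  induction N as [|N IH].
  - simpl sum_f_R0. rewrite PZ_0, PZ_succ by exact h. simpl INR. field. lra.
  - rewrite tech5, IH, !tech5, PZ_succ by exact h. field. lra.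
Qed.

(* Z_{n+1} is Z_n + 1 with conditional probability 1 - 2 Z_n / n, and Z_n otherwise. *)
Lemma expect_succ n f : (3 <= n)%nat ->
  expect (S n) f = expect n (fun k => 2 * INR k / INR n * f k + (INR n - 2 * INR k) / INR n * f (S k)).
Proof.
  intros h. unfold expect. rewrite sum_PZ_succ by exact h.
  rewrite tech5, (PZ_half n (S n)) by lia.
  rewrite Rmult_0_r, Rplus_0_r, <- plus_sum. apply sum_eq; intros; ring.
Qed.

Lemma expect_3 f : expect 3 f = f 1%nat.
Proof. unfold expect; simpl. rewrite PZ3_1, !PZ3_ne1 by lia. ring. Qed.

Lemma expect_1 n : (3 <= n)%nat -> expect n (fun _ => 1) = 1.
Proof.
  induction n as [|n IH]; intros h; [lia|].
  destruct (Nat.eq_dec n 2) as [->|ne_n]; [apply expect_3|].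
  rewrite expect_succ by lia. transitivity (expect n (fun _ => 1)); [|apply IH; lia].
  apply expect_ext; intros k. field. apply not_0_INR; lia.
Qed.

(* Moments of [Z_n - n/3]; they are the central moments once [E Z_n = n/3] is known. *)
Definition cmoment r n : R := expect n (fun k => (INR k - INR n / 3) ^ r).

Lemma cmoment_succ r n : (3 <= n)%nat ->
  cmoment r (S n) = expect n (fun k => let x := INR k - INR n / 3 in
    (2 / 3 + 2 * x / INR n) * (x - 1 / 3) ^ r + (1 / 3 - 2 * x / INR n) * (x + 2 / 3) ^ r).
Proof.
  intros h. unfold cmoment. rewrite expect_succ by exact h. apply expect_ext; intros k.
  cbv zeta. rewrite !S_INR.
  replace (INR k - (INR n + 1) / 3) with (INR k - INR n / 3 - 1 / 3) by field.
  replace (INR k + 1 - (INR n + 1) / 3) with (INR k - INR n / 3 + 2 / 3) by field.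
  set (A := (INR k - INR n / 3 - 1 / 3) ^ r). set (B := (INR k - INR n / 3 + 2 / 3) ^ r).
  field. apply not_0_INR; lia.
Qed.

(* Folds the right-hand side into one expectation, equal pointwise to that of [cmoment_succ]. *)
Ltac expand_cmoment_succ :=
  let h := fresh in
  intros h; rewrite cmoment_succ by exact h; unfold cmoment;
  rewrite <- ?expect_scal, <- ?expect_plus; apply expect_ext; intros; cbv zeta;
  field; apply not_0_INR; lia.

Lemma cmoment1_succ n : (3 <= n)%nat -> cmoment 1 (S n) = (1 - 2 / INR n) * cmoment 1 n.
Proof. expand_cmoment_succ. Qed.

Lemma cmoment2_succ n : (3 <= n)%nat ->
  cmoment 2 (S n) = 2 / 9 * cmoment 0 n + (- 2 / (3 * INR n)) * cmoment 1 n
                    + (1 - 4 / INR n) * cmoment 2 n.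
Proof. expand_cmoment_succ. Qed.

Lemma cmoment3_succ n : (3 <= n)%nat ->
  cmoment 3 (S n) = 2 / 27 * cmoment 0 n + (2 / 3 - 2 / (3 * INR n)) * cmoment 1 n
                    + (- 2 / INR n) * cmoment 2 n + (1 - 6 / INR n) * cmoment 3 n.
Proof. expand_cmoment_succ. Qed.

Lemma cmoment4_succ n : (3 <= n)%nat ->
  cmoment 4 (S n) = 2 / 27 * cmoment 0 n + (8 / 27 - 10 / (27 * INR n)) * cmoment 1 n
                    + (4 / 3 - 8 / (3 * INR n)) * cmoment 2 n + (- 4 / INR n) * cmoment 3 n
                    + (1 - 8 / INR n) * cmoment 4 n.
Proof. expand_cmoment_succ. Qed.

Lemma cmoment5_succ n : (3 <= n)%nat ->
  cmoment 5 (S n) = 10 / 243 * cmoment 0 n + (10 / 27 - 22 / (81 * INR n)) * cmoment 1 n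
                    + (20 / 27 - 50 / (27 * INR n)) * cmoment 2 n
                    + (20 / 9 - 20 / (3 * INR n)) * cmoment 3 n
                    + (- 20 / (3 * INR n)) * cmoment 4 n + (1 - 10 / INR n) * cmoment 5 n.
Proof. expand_cmoment_succ. Qed.

Lemma cmoment6_succ n : (3 <= n)%nat ->
  cmoment 6 (S n) = 22 / 729 * cmoment 0 n + (20 / 81 - 14 / (81 * INR n)) * cmoment 1 n
                    + (10 / 9 - 44 / (27 * INR n)) * cmoment 2 n
                    + (40 / 27 - 50 / (9 * INR n)) * cmoment 3 n
                    + (10 / 3 - 40 / (3 * INR n)) * cmoment 4 n
                    + (- 10 / INR n) * cmoment 5 n + (1 - 12 / INR n) * cmoment 6 n.
Proof. expand_cmoment_succ. Qed.

Lemma cmoment0 n : (3 <= n)%nat -> cmoment 0 n = 1.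
Proof. intros h; exact (expect_1 n h). Qed.

Lemma cmoment1 n : (3 <= n)%nat -> cmoment 1 n = 0.
Proof.
  induction n as [|n IH]; intros h; [lia|].
  destruct (Nat.eq_dec n 2) as [->|ne_n].
  - unfold cmoment; rewrite expect_3; simpl; field.
  - rewrite cmoment1_succ, IH by lia; ring.
Qed.

Lemma eq_from_vanishing_recurrence (a b c : nat -> R) (r : nat) :
  (forall n, (r <= n)%nat -> a (S n) - b (S n) = c n * (a n - b n)) ->
  c r = 0 -> forall n, (r < n)%nat -> a n = b n.
Proof.
  intros rec c_r n lt_rn. apply Rminus_diag_uniq.
  induction lt_rn as [|n le_rn IH].
  - rewrite rec, c_r by lia; ring.
  - rewrite rec, IH by lia; ring.
Qed.

Lemma cmoment2_eq n : (5 <= n)%nat -> cmoment 2 n = 2 * INR n / 45.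
Proof.
  apply (eq_from_vanishing_recurrence (cmoment 2) (fun n => 2 * INR n / 45)
           (fun n => 1 - 4 / INR n) 4); [intros m hm; cbv beta | simpl; field].
  rewrite cmoment2_succ, cmoment0, cmoment1 by lia.
  rewrite S_INR; field; apply not_0_INR; lia.
Qed.

Lemma cmoment3_eq n : (7 <= n)%nat -> cmoment 3 n = - 2 * INR n / 945.
Proof.
  apply (eq_from_vanishing_recurrence (cmoment 3) (fun n => - 2 * INR n / 945)
           (fun n => 1 - 6 / INR n) 6); [intros m hm; cbv beta | simpl; field].
  rewrite cmoment3_succ, cmoment0, cmoment1, cmoment2_eq by lia.
  rewrite S_INR; field; apply not_0_INR; lia.
Qed.

Lemma cmoment4_eq n : (9 <= n)%nat ->
  cmoment 4 n = - 22 * INR n / 4725 + 4 * INR n ^ 2 / 675.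
Proof.
  apply (eq_from_vanishing_recurrence (cmoment 4)
           (fun n => - 22 * INR n / 4725 + 4 * INR n ^ 2 / 675)
           (fun n => 1 - 8 / INR n) 8); [intros m hm; cbv beta | simpl; field].
  rewrite cmoment4_succ, cmoment0, cmoment1, cmoment2_eq, cmoment3_eq by lia.
  rewrite S_INR; field; apply not_0_INR; lia.
Qed.

Lemma cmoment5_eq n : (11 <= n)%nat ->
  cmoment 5 n = 2 * INR n / 4455 - 8 * INR n ^ 2 / 8505.
Proof.
  apply (eq_from_vanishing_recurrence (cmoment 5)
           (fun n => 2 * INR n / 4455 - 8 * INR n ^ 2 / 8505)
           (fun n => 1 - 10 / INR n) 10); [intros m hm; cbv beta | simpl; field].
  rewrite cmoment5_succ, cmoment0, cmoment1, cmoment2_eq, cmoment3_eq, cmoment4_eq by lia.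
  rewrite S_INR; field; apply not_0_INR; lia.
Qed.

Lemma cmoment6_eq n : (13 <= n)%nat ->
  cmoment 6 n = 94442 * INR n / 42567525 - 2732 * INR n ^ 2 / 893025 + 8 * INR n ^ 3 / 6075.
Proof.
  apply (eq_from_vanishing_recurrence (cmoment 6)
           (fun n => 94442 * INR n / 42567525 - 2732 * INR n ^ 2 / 893025 + 8 * INR n ^ 3 / 6075)
           (fun n => 1 - 12 / INR n) 12); [intros m hm; cbv beta | simpl; field].
  rewrite cmoment6_succ, cmoment0, cmoment1, cmoment2_eq, cmoment3_eq, cmoment4_eq,
    cmoment5_eq by lia.
  rewrite S_INR; field; apply not_0_INR; lia.
Qed.

Lemma mean_PZ n : (3 <= n)%nat -> mean PZ n = INR n / 3.
Proof.
  intros h. change (mean PZ n) with (expect n INR).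
  transitivity (expect n (fun k => (INR k - INR n / 3) ^ 1 + INR n / 3 * 1)).
  - apply expect_ext; intros; ring.
  - rewrite expect_plus, expect_scal, expect_1 by exact h.
    fold (cmoment 1 n). rewrite cmoment1 by exact h. ring.
Qed.

Lemma central_moment_PZ r n : (3 <= n)%nat -> central_moment PZ r n = cmoment r n.
Proof. intros h. unfold central_moment. rewrite mean_PZ by exact h. reflexivity. Qed.

Lemma Rabs_cmoment6_le n : (13 <= n)%nat -> Rabs (cmoment 6 n) <= INR n ^ 3.
Proof.
  intros h. rewrite cmoment6_eq by lia.
  assert (1 <= INR n) by (apply (le_INR 1); lia).
  apply Rabs_le; split; nra.
Qed.

Lemma central_moment6_bigO : bigO (fun n => central_moment PZ 6 n) (fun n => INR n ^ 3).
Proof.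
  exists 1, 13%nat. intros n h. apply leq_le in h.
  rewrite central_moment_PZ, Rmult_1_l by lia. exact (Rabs_cmoment6_le n h).
Qed.

Lemma PZ_le2 n k : (1 <= n <= 2)%nat -> PZ n k = PZ 3 k.
Proof.
  intros h. destruct (Nat.eq_dec k 1) as [->|ne_k].
  - rewrite PZ3_1, PZ_le2_1 by lia. reflexivity.
  - rewrite PZ3_ne1, PZ_le2_ne1 by lia. reflexivity.
Qed.

Lemma cdf_PZ_succ n k : (3 <= n)%nat ->
  cdf PZ (S n) k = cdf PZ n k - (1 - 2 * INR k / INR n) * PZ n k.
Proof.
  intros h. pose proof (INR_gt0 n ltac:(lia)). unfold cdf. induction k as [|k IH].
  - simpl. rewrite !PZ_0. ring.
  - rewrite !tech5, IH, PZ_succ by exact h. rewrite S_INR. field. lra.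
Qed.

Lemma cdf_PZ_antitone n k : (1 <= n)%nat -> cdf PZ n k >= cdf PZ (S n) k.
Proof.
  intros h. destruct (le_lt_dec n 2) as [le_n2|lt_2n].
  - apply Req_ge. unfold cdf. apply sum_eq; intros i _.
    rewrite (PZ_le2 n) by lia.
    destruct (Nat.eq_dec n 2) as [->|ne_n]; [reflexivity|].
    rewrite (PZ_le2 (S n)) by lia. reflexivity.
  - pose proof (INR_gt0 n ltac:(lia)).
    rewrite cdf_PZ_succ by lia.
    destruct (le_lt_dec (2 * k) n) as [le_2k|lt_n2k].
    + assert (2 * INR k <= INR n) by (rewrite <- (mult_INR 2); apply le_INR; exact le_2k).
      assert (0 <= 1 - 2 * INR k / INR n).
      { assert (2 * INR k / INR n <= 1); [|lra].
        apply (Rmult_le_reg_r (INR n)); [lra|].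
        unfold Rdiv; rewrite Rmult_assoc, Rinv_l; lra. }
      pose proof (PZ_ge0 n k). nra.
    + rewrite PZ_half by lia. lra.
Qed.

Lemma PZ_sum n : (1 <= n)%nat -> sum_f_R0 (fun k => PZ n k) n = 1.
Proof.
  intros h. destruct n as [|[|[|m]]]; [lia| | |].
  - simpl. rewrite PZ_le2_1, PZ_le2_ne1 by lia. ring.
  - simpl. rewrite PZ_le2_1, !PZ_le2_ne1 by lia. ring.
  - rewrite <- (expect_1 (S (S (S m)))) by lia. unfold expect. apply sum_eq; intros; ring.
Qed.

Lemma PZ_support n k : (1 <= n)%nat -> PZ n k <> 0 -> (1 <= k <= n)%nat.
Proof.
  intros h nz. destruct (le_lt_dec n 2) as [le_n2|lt_2n].
  - destruct (Nat.eq_dec k 1) as [->|ne_k]; [lia|].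
    exfalso; apply nz, PZ_le2_ne1; lia.
  - destruct k as [|k]; [exfalso; apply nz, PZ_0|].
    destruct (le_lt_dec (S k) n); [lia|].
    exfalso; apply nz, PZ_half; lia.
Qed.

Lemma PZ_diag_lt1 n : (2 <= n)%nat -> PZ n n < 1.
Proof.
  intros h. destruct (Nat.eq_dec n 2) as [->|ne_n].
  - rewrite PZ_le2_ne1 by lia. lra.
  - rewrite PZ_half by lia. lra.
Qed.

(* The test goes through [is_left], as in the elaboration of [Condition1]. *)
Definition tail_prob n (D c : R) : R :=
  sum_f_R0 (fun k => if ssrbool.is_left (Rlt_dec D (Rabs (INR k - c))) then PZ n k else 0) n.

Lemma tail_prob_le n D c p : 0 < D ->
  tail_prob n D c <= expect n (fun k => (INR k - c) ^ (2 * p)) / D ^ (2 * p).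
Proof.
  intros D_pos. assert (0 < D ^ (2 * p)) by (apply pow_lt; lra).
  unfold tail_prob, expect, Rdiv. rewrite Rmult_comm, scal_sum. apply sum_Rle; intros k _.
  pose proof (PZ_ge0 n k).
  assert (0 <= (INR k - c) ^ (2 * p)) by (rewrite pow_mult; apply pow_le, pow2_ge_0).
  assert (0 < / D ^ (2 * p)) by (apply Rinv_0_lt_compat; lra).
  destruct (Rlt_dec D (Rabs (INR k - c))) as [far|near]; cbn [ssrbool.is_left].
  - assert (D ^ (2 * p) <= (INR k - c) ^ (2 * p)).
    { rewrite !pow_mult, <- (pow2_abs (INR k - c)). apply pow_incr.
      split; [apply pow2_ge_0 | nra]. }
    apply Rle_trans with (D ^ (2 * p) * PZ n k * / D ^ (2 * p)); [right; field; lra |].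
    apply Rmult_le_compat_r; [lra|]. apply Rmult_le_compat_r; lra.
  - apply Rmult_le_pos; [apply Rmult_le_pos|]; lra.
Qed.

Lemma ln_le_Rpower x a : a * ln x <= Rpower x a.
Proof. pose proof (exp_ineq1_le (a * ln x)). unfold Rpower. lra. Qed.

Lemma ln_pow9_le x : 1 < x -> ln x ^ 9 <= 18 ^ 9 * Rpower x (1 / 2).
Proof.
  intros x_gt1. assert (0 < ln x) by (rewrite <- ln_1; apply ln_increasing; lra).
  pose proof (ln_le_Rpower x (1 / 18)).
  replace (18 ^ 9 * Rpower x (1 / 2)) with ((18 * Rpower x (1 / 18)) ^ 9).
  - apply pow_incr; lra.
  - rewrite Rpow_mult_distr, <- (Rpower_pow 9 (Rpower x (1 / 18))), Rpower_mult
      by (unfold Rpower; apply exp_pos).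
    replace (1 / 18 * INR 9) with (1 / 2) by (simpl; field). reflexivity.
Qed.

Lemma PZ_tail_bound :
  bigO (fun n => tail_prob n (Rpower (ln (INR n)) (-1 - 1 / 2) * INR n) (1 / 3 * INR n))
       (fun n => Rpower (INR n) (-2 - 1 / 2)).
Proof.
  exists (18 ^ 9), 13%nat. intros n h. apply leq_le in h.
  assert (x_ge : 13 <= INR n) by (replace 13 with (INR 13) by (simpl; ring); apply le_INR; lia).
  set (x := INR n) in *.
  assert (ln_pos : 0 < ln x) by (rewrite <- ln_1; apply ln_increasing; lra).
  set (d := Rpower (ln x) (-1 - 1 / 2)).
  assert (d_pos : 0 < d) by (unfold d, Rpower; apply exp_pos).
  assert (d6 : d ^ 6 = / ln x ^ 9).
  { unfold d. rewrite <- Rpower_pow, Rpower_mult by (unfold Rpower; apply exp_pos).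
    replace ((-1 - 1 / 2) * INR 6) with (- INR 9) by (simpl; field).
    rewrite Rpower_Ropp, Rpower_pow by exact ln_pos. reflexivity. }
  assert (x52 : Rpower x (-2 - 1 / 2) = Rpower x (1 / 2) / x ^ 3).
  { replace (-2 - 1 / 2) with (1 / 2 + - INR 3) by (simpl; field).
    rewrite Rpower_plus, Rpower_Ropp, Rpower_pow by lra. reflexivity. }
  rewrite Rabs_right.
  2: { apply Rle_ge, cond_pos_sum; intros k.
       destruct (Rlt_dec _ _); simpl; [apply PZ_ge0 | lra]. }
  replace (1 / 3 * x) with (x / 3) by field.
  eapply Rle_trans; [apply (tail_prob_le n (d * x) (x / 3) 3); nra|].
  change (expect n (fun k => (INR k - x / 3) ^ (2 * 3))) with (cmoment 6 n).
  change (2 * 3)%nat with 6%nat.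
  apply Rle_trans with (x ^ 3 / (d * x) ^ 6).
  { unfold Rdiv. apply Rmult_le_compat_r; [apply Rlt_le, Rinv_0_lt_compat, pow_lt; nra|].
    eapply Rle_trans; [apply Rle_abs | exact (Rabs_cmoment6_le n h)]. }
  replace (x ^ 3 / (d * x) ^ 6) with (ln x ^ 9 / x ^ 3).
  2: { rewrite Rpow_mult_distr, d6. field. split; try apply pow_nonzero; lra. }
  rewrite x52. unfold Rdiv. rewrite <- Rmult_assoc.
  apply Rmult_le_compat_r; [apply Rlt_le, Rinv_0_lt_compat, pow_lt; lra|].
  apply ln_pow9_le; lra.
Qed.

Lemma Condition1_PZ : Condition1 PZ (1 / 3).
Proof.
  split; [intros n k _; apply PZ_ge0|].
  split; [intros n h; apply PZ_sum, leq_le, h|].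
  split.
  { intros n k h nz. apply leq_le in h.
    destruct (PZ_support n k h nz). apply andb_true_intro; split; apply leq_le; lia. }
  split; [intros n h; apply PZ_diag_lt1, leq_le, h|].
  split; [intros n k h _; apply cdf_PZ_antitone, leq_le, h|].
  split; [lra|].
  exists (1 / 2), (fun n => Rpower (ln (INR n)) (-1 - 1 / 2)).
  split; [lra|]. split.
  { exists 1, 0%nat. intros n _. rewrite Rabs_right; [lra|].
    unfold Rpower; apply Rle_ge, Rlt_le, exp_pos. }
  split; [|exact PZ_tail_bound].
  exists 0, 3%nat. intros n h. apply leq_le in h.
  rewrite !mean_PZ, S_INR by lia.
  replace ((INR n + 1) / 3 - INR n / 3 - 1 / 3) with 0 by field.
  rewrite Rabs_R0. lra.
Qed.

Theorem mainTheorem11 :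
  (forall n, (1 <= n)%nat -> PZ n 0 = 0) /\
  (forall n k, (1 <= n)%nat -> cdf PZ n k >= cdf PZ (S n) k) /\
  (forall n, (3 <= n)%nat -> mean PZ n = INR n / 3) /\
  (forall n, (5 <= n)%nat -> central_moment PZ 2 n = 2 * INR n / 45) /\
  bigO (fun n => central_moment PZ 6 n) (fun n => INR n ^ 3) /\
  Condition1 PZ (1 / 3).
Proof.
  split; [intros n _; apply PZ_0|].
  split; [exact cdf_PZ_antitone|].
  split; [exact mean_PZ|].
  split; [intros n h; rewrite central_moment_PZ by lia; exact (cmoment2_eq n h)|].
  split; [exact central_moment6_bigO | exact Condition1_PZ].
Qed.
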